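(* Let $\theta\in\mathbb{R}/\mathbb{Z}$, $\theta\neq0$, and let $\mathbb{L}_{\mathcal{R}(\theta)}$ be the prime renormalization of the rotation $\mathbb{L}_\theta$. Then \[ \mathcal{R}(\theta)=\begin{cases}\dfrac{\theta}{1-\theta}&\text{if }0\le\theta\le\frac12,\\[1ex] \dfrac{2\theta-1}{\theta}&\text{if }\frac12\le\theta\le1.\end{cases} \] Moreover, writing $\theta=[0;a_1,a_2,\dots]=1-[0;b_1,b_2,\dots]$ with all $a_i,b_i$ positive integers, we have \[ \mathcal{R}([0;a_1,a_2,\dots])=\begin{cases}[0;a_1-1,a_2,\dots]&\text{if }a_1>1,\\ 1-[0;a_2,a_3,\dots]&\text{if }a_1=1,\end{cases} \] and \[ \mathcal{R}(1-[0;b_1,b_2,\dots])=\begin{cases}1-[0;b_1-1,b_2,\dots]&\text{if }b_1>1,\\ [0;b_2,b_3,\dots]&\text{if }b_1=1.\end{cases} \]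
   Context: For $\theta\in\mathbb{R}/\mathbb{Z}$ let $\mathbb{L}_\theta:\overline{\mathbb{D}}\to\overline{\mathbb{D}}$, $z\mapsto e^{2\pi i\theta}z$, be the rotation of the closed unit disk. Assume $\theta\neq0$ and let $\mathbb{I}$ be a closed internal ray of $\overline{\mathbb{D}}$. A fundamental sector $\mathbb{Y}$ of $\mathbb{L}_\theta$ is the smallest closed sector of $\overline{\mathbb{D}}$ bounded by $\mathbb{I}$ and $\mathbb{L}_\theta(\mathbb{I})$ (if $\theta=1/2$ either sector may be taken); its angle $\omega$ at the vertex $0$ (measured in full turns) is $\theta$ if $\theta\in[0,1/2]$ and $1-\theta$ otherwise. Rotate so that $1\in\overline{\mathbb{D}}\setminus\mathbb{Y}$. Set $\mathbb{Y}_-=\mathbb{L}_\theta^{-1}(\mathbb{Y})$ and $\mathbb{Y}_+=\overline{\mathbb{D}\setminus(\mathbb{Y}\cup\mathbb{Y}_-)}$. Then $(\mathbb{L}_\theta|_{\mathbb{Y}_+},\mathbb{L}^2_\theta|_{\mathbb{Y}_-})$ is the first return map of $\mathbb{Y}_-\cup\mathbb{Y}_+$ to itself. The prime renormalization of $\mathbb{L}_\theta$ is the rotation $\mathbb{L}_{\mathcal{R}(\theta)}$ of $\overline{\mathbb{D}}$ obtained from this pair by the gluing map $\psi:\mathbb{Y}_-\cup\mathbb{Y}_+\to\overline{\mathbb{D}}$, $z\mapsto z^{1/(1-\omega)}$ (argument measured from a boundary ray of the sector $\mathbb{Y}_-\cup\mathbb{Y}_+$), which identifies the two boundary rays of this sector.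 *)

From Stdlib Require Import Reals Lra List ClassicalEpsilon.
Open Scope R_scope.

(* Points of the closed unit disk are described in polar form; the rotations
   and the gluing map act on the argument only (the radius is preserved by
   rotations and transformed by r |-> r^(1/(1-omega)) by psi, which commutes
   with everything), so everything is expressed through the argument, an
   angle in R/Z measured in full turns and represented by real lifts. *)

Definition eqmod1 (x y : R) : Prop := exists k : Z, x - y = IZR k.

(* the closed sector (arc of arguments) starting at angle a, of width w,
   measured counterclockwise; as a 1-periodic set of real lifts *)
Definition arc (a w : R) (t : R) : Prop :=
  exists k : Z, a <= t + IZR k <= a + w.

(* Y is a fundamental sector of L_theta built from the internal ray of
   argument alpha: the smallest of the two closed sectors bounded by the rays
   of arguments alpha and alpha+theta (either one if they have equal size). *)
Definition fund_sector (theta alpha : R) (Y : R -> Prop) : Prop :=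
  ((forall t, Y t <-> arc alpha theta t) /\ theta <= 1 - theta) \/
  ((forall t, Y t <-> arc (alpha + theta) (1 - theta) t) /\ 1 - theta <= theta).

(* angle of the fundamental sector at the vertex 0 *)
Definition omega (theta : R) : R :=
  if Rle_dec theta (1/2) then theta else 1 - theta.

Definition Yminus (theta : R) (Y : R -> Prop) : R -> Prop :=
  fun t => Y (t + theta).

Definition Yplus (theta : R) (Y : R -> Prop) : R -> Prop :=
  adherence (fun t => ~ Y t /\ ~ Yminus theta Y t).

(* [renorm_rot theta rho]: for every admissible choice of fundamental sector Y
   (with 1 not in Y), writing the sector Y_- u Y_+ as the arc starting at the
   boundary ray of argument beta, of width 1-omega, the gluing map psi
   (argument beta+s |-> s/(1-omega), s in [0,1-omega]) conjugates the first
   return map (L_theta on Y_+, L_theta^2 on Y_-) to the rotation by rho. *)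
Definition renorm_rot (theta rho : R) : Prop :=
  forall (alpha : R) (Y : R -> Prop) (beta : R),
    fund_sector theta alpha Y ->
    ~ Y 0 ->
    (forall t, (Yminus theta Y t \/ Yplus theta Y t) <-> arc beta (1 - omega theta) t) ->
    forall s, 0 <= s <= 1 - omega theta ->
      (Yplus theta Y (beta + s) ->
         exists s', 0 <= s' <= 1 - omega theta /\
           eqmod1 (beta + s + theta) (beta + s') /\
           eqmod1 (s' / (1 - omega theta)) (s / (1 - omega theta) + rho)) /\
      (Yminus theta Y (beta + s) ->
         exists s', 0 <= s' <= 1 - omega theta /\
           eqmod1 (beta + s + 2 * theta) (beta + s') /\
           eqmod1 (s' / (1 - omega theta)) (s / (1 - omega theta) + rho)).

Definition prime_renorm (theta : R) : R :=
  epsilon (inhabits 0) (fun rho => 0 <= rho < 1 /\ renorm_rot theta rho).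

Definition cf_fin (l : list nat) : R :=
  fold_right (fun a x => / (INR a + x)) 0 l.

(* x = [0; a_0, a_1, ...] (infinite continued fraction, indices from 0) *)
Definition is_cf (a : nat -> nat) (x : R) : Prop :=
  Un_cv (fun n => cf_fin (map a (seq 0 n))) x.

From Stdlib Require Import Reals List Lra Lia ClassicalEpsilon.
Open Scope R_scope.

(* For theta <= 1/2 the sector Y_- u Y_+ of
   opening 1 - theta consists of Y_+ (length 1 - 2 theta) followed by Y_-
   (length theta); L_theta moves Y_+ by theta and L_theta^2 moves Y_- by
   2 theta - 1, so the first return map is the rotation by theta of a circle of
   length 1 - theta, which psi rescales to the rotation by theta / (1 - theta).
   For theta >= 1/2 the sector has opening theta, Y_- (length 1 - theta) comes
   first, and both pieces move by 2 theta - 1 modulo theta.  Following a single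
   point of one explicit configuration shows that rho is determined mod 1.  The
   two formulas are exchanged by theta |-> 1 - theta, and the continued fraction
   statements follow from theta = 1 / (a_1 + [0; a_2, ...]). *)

Lemma IZR_bounds_eq0 (k : Z) : -1 < IZR k < 1 -> k = 0%Z.
Proof. intros [H1 H2]; apply lt_IZR in H1; apply lt_IZR in H2; lia. Qed.

Lemma eqmod1_refl x : eqmod1 x x.
Proof. exists 0%Z; lra. Qed.

Lemma eqmod1_sym x y : eqmod1 x y -> eqmod1 y x.
Proof. intros [k H]; exists (- k)%Z; rewrite opp_IZR; lra. Qed.

Lemma eqmod1_trans x y z : eqmod1 x y -> eqmod1 y z -> eqmod1 x z.
Proof. intros [k H] [m H']; exists (k + m)%Z; rewrite plus_IZR; lra. Qed.

Lemma eqmod1_sub_l c x y : eqmod1 x y -> eqmod1 (c - x) (c - y).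
Proof. intros [k H]; exists (- k)%Z; rewrite opp_IZR; lra. Qed.

Lemma eqmod1_eq x y : eqmod1 x y -> -1 < x - y < 1 -> x = y.
Proof.
  intros [k H] Hb; rewrite H in Hb.
  apply IZR_bounds_eq0 in Hb; subst k; lra.
Qed.

Lemma eqmod1_rescale L s s' d (k : Z) rho : L <> 0 -> s' = s + d + IZR k * L ->
  eqmod1 (s' / L) (s / L + rho) <-> eqmod1 rho (d / L).
Proof.
  intros HL ->.
  replace ((s + d + IZR k * L) / L) with (s / L + d / L + IZR k) by (field; exact HL).
  split; intros [m Hm]; exists (k - m)%Z; rewrite minus_IZR; lra.
Qed.

Lemma arc_of_bounds a w t : a <= t <= a + w -> arc a w t.
Proof. intros H; exists 0%Z; lra. Qed.

Lemma not_arc a w t : w < t - a < 1 -> ~ arc a w t.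
Proof.
  intros H [k Hk].
  assert (H1 : -1 < IZR k) by lra; assert (H2 : IZR k < 0) by lra.
  apply lt_IZR in H1; apply lt_IZR in H2; lia.
Qed.

Lemma arc_add_Z a w t (n : Z) : arc a w (t + IZR n) <-> arc a w t.
Proof.
  split; intros [k Hk].
  - exists (k + n)%Z; rewrite plus_IZR; lra.
  - exists (k - n)%Z; rewrite minus_IZR; lra.
Qed.

Lemma arc_eqmod1_base a b w t : eqmod1 a b -> arc a w t <-> arc b w t.
Proof.
  intros [n Hn]; split; intros [k Hk].
  - exists (k - n)%Z; rewrite minus_IZR; lra.
  - exists (k + n)%Z; rewrite plus_IZR; lra.
Qed.

Lemma arc_translate a w t c : arc a w (t + c) <-> arc (a - c) w t.
Proof. split; intros [k Hk]; exists k; lra. Qed.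

Lemma arc_cat a w1 w2 t : 0 <= w1 -> 0 <= w2 ->
  arc a w1 t \/ arc (a + w1) w2 t <-> arc a (w1 + w2) t.
Proof.
  intros H1 H2; split.
  - intros [[k Hk] | [k Hk]]; exists k; lra.
  - intros [k Hk]; destruct (Rle_dec (t + IZR k) (a + w1)).
    + left; exists k; lra.
    + right; exists k; lra.
Qed.

Lemma arc_mono a w a' w' t : a <= a' -> a' + w' <= a + w -> arc a' w' t -> arc a w t.
Proof. intros H1 H2 [k Hk]; exists k; lra. Qed.

Lemma arc_window b c a w s : eqmod1 b c -> 0 <= a -> a + w < 1 -> 0 <= s < 1 ->
  arc (c + a) w (b + s) -> a <= s <= a + w.
Proof.
  intros [n Hn] Ha Haw Hs [k Hk].
  assert (Hkn : (k + n)%Z = 0%Z) by (apply IZR_bounds_eq0; rewrite plus_IZR; lra).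
  assert (IZR k = - IZR n) by (rewrite <- opp_IZR; f_equal; lia).
  lra.
Qed.

(* If [b] lies at offset [d > 0] in [arc c w], the point [b + w (1 - d)] of
   [arc b w] falls into the gap of [arc c w]. *)
Lemma arc_base_unique b c w : 0 <= w < 1 ->
  (forall t, arc b w t -> arc c w t) -> eqmod1 b c.
Proof.
  intros Hw Hsub.
  destruct (Hsub b (arc_of_bounds b w b ltac:(lra))) as [k Hk].
  set (d := b + IZR k - c).
  assert (Hd : 0 <= d <= w) by (unfold d; lra).
  destruct (Req_dec d 0) as [Hd0 | Hd0].
  - exists (- k)%Z; rewrite opp_IZR; unfold d in Hd0; lra.
  - exfalso.
    assert (Hwd : 0 <= w * d) by nra.
    assert (Hin : arc c w (b + w * (1 - d))).
    { apply Hsub, arc_of_bounds; split; nra. }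
    apply (not_arc c w (b + w * (1 - d) + IZR k)); [| apply arc_add_Z, Hin].
    replace (b + w * (1 - d) + IZR k - c) with (d + w * (1 - d)) by (unfold d; ring).
    split; nra.
Qed.

Lemma adherence_compl_arc P p q t : (forall x, P x <-> ~ arc p q x) ->
  adherence P t -> arc (p + q) (1 - q) t.
Proof.
  intros HP Hadh.
  destruct (archimed (p - t)) as [H1 H2].
  set (k := up (p - t)) in *.
  set (u := t + IZR k - p).
  destruct (Rle_dec q u) as [Hqu | Hqu].
  { exists k; unfold u in *; lra. }
  assert (Hd : 0 < Rmin u (q - u)) by (apply Rmin_pos; unfold u in *; lra).
  destruct (Hadh (disc t (mkposreal _ Hd))) as [y [Hy HPy]].
  { exists (mkposreal _ Hd); intros z Hz; exact Hz. }
  exfalso; apply HP in HPy; apply HPy.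
  unfold disc in Hy; simpl in Hy; apply Rabs_def2 in Hy.
  pose proof (Rmin_l u (q - u)); pose proof (Rmin_r u (q - u)).
  exists k; unfold u in *; lra.
Qed.

(* Every point of the closed gap is approached from inside the open gap
   along the segment towards the midpoint of the gap. *)
Lemma arc_sub_adherence_compl P p q t : 0 <= q < 1 -> (forall x, P x <-> ~ arc p q x) ->
  arc (p + q) (1 - q) t -> adherence P t.
Proof.
  intros Hq HP [k Hk] V [delta Hdelta].
  set (u := t + IZR k - p).
  set (l := Rmin (1/2) (delta/2)).
  assert (Hl : 0 < l) by (apply Rmin_pos; pose proof (cond_pos delta); lra).
  assert (Hl1 : l <= 1/2) by apply Rmin_l.
  assert (Hl2 : l <= delta/2) by apply Rmin_r.
  exists (t + l * ((1 + q)/2 - u)); split.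
  - apply Hdelta; unfold disc.
    replace (t + l * ((1 + q)/2 - u) - t) with (l * ((1 + q)/2 - u)) by ring.
    rewrite Rabs_mult, (Rabs_pos_eq l) by lra.
    assert (Rabs ((1 + q)/2 - u) <= 1) by (apply Rabs_le; unfold u; lra).
    assert (l * Rabs ((1 + q)/2 - u) <= l * 1) by (apply Rmult_le_compat_l; lra).
    pose proof (cond_pos delta); lra.
  - apply HP; rewrite <- (arc_add_Z _ _ _ k); apply not_arc.
    replace (t + l * ((1 + q)/2 - u) + IZR k - p) with ((1 - l) * u + l * ((1 + q)/2))
      by (unfold u; ring).
    assert (Hu : q <= u <= 1) by (unfold u; lra).
    assert (0 <= (1 - l) * (u - q)) by (apply Rmult_le_pos; lra).
    assert (0 <= (1 - l) * (1 - u)) by (apply Rmult_le_pos; lra).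
    assert (0 < l * (1 - q)) by (apply Rmult_lt_0_compat; lra).
    split; nra.
Qed.

Definition return_rotation (theta L rho : R) (Y : R -> Prop) (beta : R) : Prop :=
  forall s, 0 <= s <= L ->
    (Yplus theta Y (beta + s) ->
       exists s', 0 <= s' <= L /\ eqmod1 (beta + s + theta) (beta + s') /\
         eqmod1 (s' / L) (s / L + rho)) /\
    (Yminus theta Y (beta + s) ->
       exists s', 0 <= s' <= L /\ eqmod1 (beta + s + 2 * theta) (beta + s') /\
         eqmod1 (s' / L) (s / L + rho)).

Section SmallAngle.

Variables (theta alpha : R) (Y : R -> Prop).
Hypothesis Htheta : 0 < theta <= 1/2.
Hypothesis HY : forall t, Y t <-> arc alpha theta t.

Lemma Yminus_small t : Yminus theta Y t <-> arc (alpha + theta + (1 - 2 * theta)) theta t.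
Proof.
  unfold Yminus; rewrite HY, arc_translate.
  apply arc_eqmod1_base; exists (-1)%Z; lra.
Qed.

Lemma outside_small t :
  ~ Y t /\ ~ Yminus theta Y t <-> ~ arc (alpha - theta) (2 * theta) t.
Proof.
  unfold Yminus; rewrite !HY, arc_translate.
  replace (2 * theta) with (theta + theta) by ring.
  rewrite <- arc_cat by lra; replace (alpha - theta + theta) with alpha by ring.
  tauto.
Qed.

Lemma Yplus_small t : Yplus theta Y t -> arc (alpha + theta) (1 - 2 * theta) t.
Proof.
  intros H; apply (adherence_compl_arc _ _ _ _ outside_small) in H.
  replace (alpha + theta) with (alpha - theta + 2 * theta) by ring; exact H.
Qed.

Lemma sector_small t :
  Yminus theta Y t \/ Yplus theta Y t <-> arc (alpha + theta) (1 - theta) t.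
Proof.
  rewrite Yminus_small.
  replace (1 - theta) with ((1 - 2 * theta) + theta) by ring.
  rewrite <- arc_cat by lra; split.
  - intros [Hm | Hp]; [right; exact Hm | left; apply Yplus_small, Hp].
  - intros [Hp | Hm]; [| left; exact Hm].
    (* For theta = 1/2, Y_+ is empty and this arc is the first point of Y_-. *)
    destruct (Req_dec theta (1/2)) as [Hhalf | Hhalf].
    + left; revert Hp; apply arc_mono; lra.
    + right; apply (arc_sub_adherence_compl _ (alpha - theta) (2 * theta));
        [lra | exact outside_small |].
      replace (alpha - theta + 2 * theta) with (alpha + theta) by ring; exact Hp.
Qed.

Variables (beta rho : R).
Hypothesis HU : forall t, Yminus theta Y t \/ Yplus theta Y t <-> arc beta (1 - theta) t.
Hypothesis Hrho : eqmod1 rho (theta / (1 - theta)).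

Lemma return_small : return_rotation theta (1 - theta) rho Y beta.
Proof.
  assert (Hb : eqmod1 beta (alpha + theta)).
  { apply (arc_base_unique _ _ (1 - theta)); [lra |].
    intros t Ht; apply sector_small, HU, Ht. }
  intros s Hs; split.
  - intros Hp; apply Yplus_small in Hp.
    assert (Hw : 0 <= s <= 0 + (1 - 2 * theta)).
    { apply (arc_window beta (alpha + theta)); [exact Hb | lra | lra | lra |].
      rewrite Rplus_0_r; exact Hp. }
    exists (s + theta); split; [lra | split].
    + rewrite Rplus_assoc; apply eqmod1_refl.
    + apply (eqmod1_rescale _ _ _ theta 0); [lra | lra | exact Hrho].
  - intros Hm; apply Yminus_small in Hm.
    assert (Hw : 1 - 2 * theta <= s <= 1 - 2 * theta + theta).
    { apply (arc_window beta (alpha + theta)); [exact Hb | lra | lra | lra | exact Hm]. }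
    exists (s + 2 * theta - 1); split; [lra | split].
    + exists 1%Z; lra.
    + apply (eqmod1_rescale _ _ _ theta (-1)); [lra | lra | exact Hrho].
Qed.

End SmallAngle.

Section LargeAngle.

Variables (theta alpha : R) (Y : R -> Prop).
Hypothesis Htheta : 1/2 <= theta < 1.
Hypothesis HY : forall t, Y t <-> arc (alpha + theta) (1 - theta) t.

Lemma Yminus_large t : Yminus theta Y t <-> arc alpha (1 - theta) t.
Proof.
  unfold Yminus; rewrite HY, arc_translate.
  replace (alpha + theta - theta) with alpha by ring; tauto.
Qed.

Lemma outside_large t :
  ~ Y t /\ ~ Yminus theta Y t <-> ~ arc (alpha + theta - 1) (2 - 2 * theta) t.
Proof.
  rewrite Yminus_large, HY, (arc_eqmod1_base (alpha + theta) (alpha + theta - 1))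
    by (exists 1%Z; lra).
  replace (2 - 2 * theta) with ((1 - theta) + (1 - theta)) by ring.
  rewrite <- arc_cat by lra.
  replace (alpha + theta - 1 + (1 - theta)) with alpha by ring; tauto.
Qed.

Lemma Yplus_large t : Yplus theta Y t -> arc (alpha + (1 - theta)) (2 * theta - 1) t.
Proof.
  intros H; apply (adherence_compl_arc _ _ _ _ outside_large) in H.
  replace (alpha + (1 - theta)) with (alpha + theta - 1 + (2 - 2 * theta)) by ring.
  replace (2 * theta - 1) with (1 - (2 - 2 * theta)) by ring; exact H.
Qed.

Lemma sector_large t : Yminus theta Y t \/ Yplus theta Y t <-> arc alpha theta t.
Proof.
  rewrite Yminus_large.
  replace (arc alpha theta t) with (arc alpha ((1 - theta) + (2 * theta - 1)) t)
    by (f_equal; ring).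
  rewrite <- arc_cat by lra; split.
  - intros [Hm | Hp]; [left; exact Hm | right; apply Yplus_large, Hp].
  - intros [Hm | Hp]; [left; exact Hm |].
    destruct (Req_dec theta (1/2)) as [Hhalf | Hhalf].
    + left; revert Hp; apply arc_mono; lra.
    + right; apply (arc_sub_adherence_compl _ (alpha + theta - 1) (2 - 2 * theta));
        [lra | exact outside_large |].
      replace (alpha + theta - 1 + (2 - 2 * theta)) with (alpha + (1 - theta)) by ring.
      replace (1 - (2 - 2 * theta)) with (2 * theta - 1) by ring; exact Hp.
Qed.

Variables (beta rho : R).
Hypothesis HU : forall t, Yminus theta Y t \/ Yplus theta Y t <-> arc beta theta t.
Hypothesis Hrho : eqmod1 rho ((2 * theta - 1) / theta).

Lemma return_large : return_rotation theta theta rho Y beta.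
Proof.
  assert (Hb : eqmod1 beta alpha).
  { apply (arc_base_unique _ _ theta); [lra |].
    intros t Ht; apply sector_large, HU, Ht. }
  intros s Hs; split.
  - intros Hp; apply Yplus_large in Hp.
    assert (Hw : 1 - theta <= s <= 1 - theta + (2 * theta - 1)).
    { apply (arc_window beta alpha); [exact Hb | lra | lra | lra | exact Hp]. }
    exists (s + theta - 1); split; [lra | split].
    + exists 1%Z; lra.
    + apply (eqmod1_rescale _ _ _ (2 * theta - 1) (-1)); [lra | lra | exact Hrho].
  - intros Hm; apply Yminus_large in Hm.
    assert (Hw : 0 <= s <= 0 + (1 - theta)).
    { apply (arc_window beta alpha); [exact Hb | lra | lra | lra |].
      rewrite Rplus_0_r; exact Hm. }
    exists (s + 2 * theta - 1); split; [lra | split].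
    + exists 1%Z; lra.
    + apply (eqmod1_rescale _ _ _ (2 * theta - 1) 0); [lra | lra | exact Hrho].
Qed.

End LargeAngle.

Lemma omega_small theta : theta <= 1/2 -> omega theta = theta.
Proof. intros H; unfold omega; destruct (Rle_dec theta (1/2)); lra. Qed.

Lemma omega_large theta : 1/2 <= theta -> omega theta = 1 - theta.
Proof. intros H; unfold omega; destruct (Rle_dec theta (1/2)); lra. Qed.

Lemma renorm_formulas_half : eqmod1 ((1/2) / (1 - 1/2)) ((2 * (1/2) - 1) / (1/2)).
Proof. exists 1%Z; field. Qed.

Lemma centered_arc_not0 w : 0 <= w < 1 -> ~ arc ((1 - w) / 2) w 0.
Proof.
  intros Hw H; rewrite <- (arc_add_Z _ _ _ 1), Rplus_0_l in H.
  revert H; apply not_arc; lra.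
Qed.

Lemma renorm_rot_intro theta rho : 0 < theta < 1 ->
  (theta <= 1/2 -> eqmod1 rho (theta / (1 - theta))) ->
  (1/2 <= theta -> eqmod1 rho ((2 * theta - 1) / theta)) ->
  renorm_rot theta rho.
Proof.
  intros Ht Hsmall Hlarge alpha Y beta [[HY Hle] | [HY Hge]] _ HU.
  - rewrite omega_small in * by lra.
    apply (return_small theta alpha Y); [lra | exact HY | exact HU | apply Hsmall; lra].
  - rewrite omega_large in * by lra.
    replace (1 - (1 - theta)) with theta in * by ring.
    apply (return_large theta alpha Y); [lra | exact HY | exact HU | apply Hlarge; lra].
Qed.

Lemma renorm_rot_small_unique theta rho : 0 < theta <= 1/2 ->
  renorm_rot theta rho -> eqmod1 rho (theta / (1 - theta)).
Proof.
  intros Ht Hrot.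
  (* Test configuration: Y centred at 1/2, tracking the last point of Y_-. *)
  set (alpha := (1 - theta) / 2).
  set (Y := arc alpha theta).
  assert (HY : forall t, Y t <-> arc alpha theta t) by reflexivity.
  assert (HU : forall t, Yminus theta Y t \/ Yplus theta Y t <->
                         arc (alpha + theta) (1 - omega theta) t).
  { intros t; rewrite omega_small by lra; exact (sector_small theta alpha Y Ht HY t). }
  assert (Hs : 0 <= 1 - theta <= 1 - omega theta) by (rewrite omega_small; lra).
  assert (Hfund : fund_sector theta alpha Y) by (left; split; [exact HY | lra]).
  assert (HY0 : ~ Y 0) by (apply centered_arc_not0; lra).
  destruct (Hrot alpha Y (alpha + theta) Hfund HY0 HU (1 - theta) Hs) as [_ Hreturn].
  rewrite omega_small in Hreturn by lra.
  destruct Hreturn as [s' [Hs' [Hshift Hrot']]].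
  { apply HY; exists (-1)%Z; lra. }
  assert (Hs'eq : theta = s').
  { apply eqmod1_eq; [| lra].
    destruct Hshift as [k Hk]; exists (k - 1)%Z; rewrite minus_IZR; lra. }
  subst s'.
  apply (eqmod1_rescale (1 - theta) (1 - theta) theta theta (-1)) in Hrot';
    [exact Hrot' | lra | lra].
Qed.

Lemma renorm_rot_large_unique theta rho : 1/2 <= theta < 1 ->
  renorm_rot theta rho -> eqmod1 rho ((2 * theta - 1) / theta).
Proof.
  intros Ht Hrot.
  (* Test configuration: Y centred at 1/2, tracking the first point of Y_-. *)
  set (alpha := theta / 2 - theta).
  set (Y := arc ((1 - (1 - theta)) / 2) (1 - theta)).
  assert (HY : forall t, Y t <-> arc (alpha + theta) (1 - theta) t).
  { intros t; unfold Y, alpha.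
    replace (theta / 2 - theta + theta) with ((1 - (1 - theta)) / 2) by field.
    reflexivity. }
  assert (HU : forall t, Yminus theta Y t \/ Yplus theta Y t <->
                         arc alpha (1 - omega theta) t).
  { intros t; rewrite omega_large by lra; replace (1 - (1 - theta)) with theta by ring.
    exact (sector_large theta alpha Y Ht HY t). }
  assert (Hs : 0 <= 0 <= 1 - omega theta) by (rewrite omega_large; lra).
  assert (Hfund : fund_sector theta alpha Y) by (right; split; [exact HY | lra]).
  assert (HY0 : ~ Y 0) by (apply centered_arc_not0; lra).
  destruct (Hrot alpha Y alpha Hfund HY0 HU 0 Hs) as [_ Hreturn].
  rewrite omega_large in Hreturn by lra.
  replace (1 - (1 - theta)) with theta in Hreturn by ring.
  destruct Hreturn as [s' [Hs' [Hshift Hrot']]].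
  { apply HY; exists 0%Z; lra. }
  assert (Hs'eq : 2 * theta - 1 = s').
  { apply eqmod1_eq; [| lra].
    destruct Hshift as [k Hk]; exists (k - 1)%Z; rewrite minus_IZR; lra. }
  subst s'.
  apply (eqmod1_rescale theta 0 (2 * theta - 1) (2 * theta - 1) 0) in Hrot';
    [exact Hrot' | lra | lra].
Qed.

Lemma renorm_rot_small theta rho : 0 < theta <= 1/2 ->
  renorm_rot theta rho <-> eqmod1 rho (theta / (1 - theta)).
Proof.
  intros Ht; split; [apply renorm_rot_small_unique, Ht |].
  intros H; apply renorm_rot_intro; [lra | intros; exact H |].
  intros; assert (theta = 1/2) by lra; subst theta.
  exact (eqmod1_trans _ _ _ H renorm_formulas_half).
Qed.

Lemma renorm_rot_large theta rho : 1/2 <= theta < 1 ->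
  renorm_rot theta rho <-> eqmod1 rho ((2 * theta - 1) / theta).
Proof.
  intros Ht; split; [apply renorm_rot_large_unique, Ht |].
  intros H; apply renorm_rot_intro; [lra | | intros; exact H].
  intros; assert (theta = 1/2) by lra; subst theta.
  exact (eqmod1_trans _ _ _ H (eqmod1_sym _ _ renorm_formulas_half)).
Qed.

Lemma prime_renorm_eqmod1 theta r : (forall rho, renorm_rot theta rho <-> eqmod1 rho r) ->
  eqmod1 (prime_renorm theta) r.
Proof.
  intros H; apply H.
  assert (Hex : exists rho, 0 <= rho < 1 /\ renorm_rot theta rho).
  { exists (frac_part r); pose proof (base_fp r); split; [lra |].
    apply H; exists (- Int_part r)%Z; unfold frac_part; rewrite opp_IZR; ring. }
  exact (proj2 (epsilon_spec (inhabits 0) _ Hex)).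
Qed.

Lemma prime_renorm_small theta : 0 < theta <= 1/2 ->
  eqmod1 (prime_renorm theta) (theta / (1 - theta)).
Proof. intros Ht; apply prime_renorm_eqmod1; intros rho; apply renorm_rot_small, Ht. Qed.

Lemma prime_renorm_large theta : 1/2 <= theta < 1 ->
  eqmod1 (prime_renorm theta) ((2 * theta - 1) / theta).
Proof. intros Ht; apply prime_renorm_eqmod1; intros rho; apply renorm_rot_large, Ht. Qed.

Lemma prime_renorm_reflect theta x : 0 < theta < 1 ->
  eqmod1 (prime_renorm (1 - theta)) x -> eqmod1 (prime_renorm theta) (1 - x).
Proof.
  intros Ht Hx; apply (eqmod1_trans _ (1 - prime_renorm (1 - theta))); [| apply eqmod1_sub_l, Hx].
  destruct (Rle_dec theta (1/2)) as [Hle | Hgt].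
  - eapply eqmod1_trans; [apply prime_renorm_small; lra |].
    replace (theta / (1 - theta)) with (1 - (2 * (1 - theta) - 1) / (1 - theta)) by (field; lra).
    apply eqmod1_sub_l, eqmod1_sym, prime_renorm_large; lra.
  - eapply eqmod1_trans; [apply prime_renorm_large; lra |].
    replace ((2 * theta - 1) / theta) with (1 - (1 - theta) / (1 - (1 - theta))) by (field; lra).
    apply eqmod1_sub_l, eqmod1_sym, prime_renorm_small; lra.
Qed.

Lemma inv_in_unit x : 1 <= x -> 0 < / x <= 1.
Proof.
  intros Hx; split; [apply Rinv_0_lt_compat; lra |].
  rewrite <- Rinv_1; apply Rinv_le_contravar; lra.
Qed.

Lemma cf_fin_bounds l : Forall (fun n => (0 < n)%nat) l -> 0 <= cf_fin l <= 1.
Proof.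
  induction 1 as [| a l Ha _ IH]; simpl; [lra |].
  assert (1 <= INR a) by (apply (le_INR 1); exact Ha).
  pose proof (inv_in_unit (INR a + cf_fin l)); lra.
Qed.

Lemma cf_fin_prefix_S (f : nat -> nat) n :
  cf_fin (map f (seq 0 (S n))) = / (INR (f 0%nat) + cf_fin (map (fun i => f (S i)) (seq 0 n))).
Proof. simpl; rewrite <- seq_shift, map_map; reflexivity. Qed.

Lemma Un_cv_bounds u l lo hi : (forall n, lo <= u n <= hi) -> Un_cv u l -> lo <= l <= hi.
Proof.
  intros Hb Hu.
  assert (Hconst : forall c, Un_cv (fun _ => c) c).
  { intros c eps Heps; exists 0%nat; intros n _; unfold R_dist.
    rewrite Rminus_diag, Rabs_R0; exact Heps. }
  split.
  - exact (Rle_cv_lim (fun n => proj1 (Hb n)) (Hconst lo) Hu).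
  - exact (Rle_cv_lim (fun n => proj2 (Hb n)) Hu (Hconst hi)).
Qed.

Lemma is_cf_cons (f : nat -> nat) x : is_cf (fun i => f (S i)) x ->
  0 < INR (f 0%nat) + x -> is_cf f (/ (INR (f 0%nat) + x)).
Proof.
  intros Hcf Hpos; unfold is_cf; apply (CV_shift _ 1).
  apply (Un_cv_ext (fun n => (fun y => / (INR (f 0%nat) + y))
                               (cf_fin (map (fun i => f (S i)) (seq 0 n))))).
  - intros n; rewrite Nat.add_1_r, cf_fin_prefix_S; reflexivity.
  - apply (continuity_seq (fun y => / (INR (f 0%nat) + y))); [| exact Hcf].
    assert (INR (f 0%nat) + x <> 0) by lra; reg.
Qed.

Lemma is_cf_tail (a : nat -> nat) u : (forall i, (0 < a i)%nat) -> is_cf a u -> 0 < u ->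
  is_cf (fun i => a (S i)) (/ u - INR (a 0%nat)) /\ 0 <= / u - INR (a 0%nat) <= 1.
Proof.
  intros Ha Hcf Hu.
  set (T n := cf_fin (map (fun i => a (S i)) (seq 0 n))).
  assert (HT : Un_cv T (/ u - INR (a 0%nat))).
  { apply (Un_cv_ext (fun n => (fun y => / y - INR (a 0%nat))
                                 (cf_fin (map a (seq 0 (n + 1)))))).
    - intros n; rewrite Nat.add_1_r, cf_fin_prefix_S, Rinv_inv; unfold T; ring.
    - apply (continuity_seq (fun y => / y - INR (a 0%nat))); [| exact (CV_shift' _ 1 u Hcf)].
      assert (u <> 0) by lra; reg. }
  split; [exact HT |].
  apply (Un_cv_bounds T); [| exact HT].
  intros n; apply cf_fin_bounds, Forall_forall.
  intros m Hm; apply in_map_iff in Hm; destruct Hm as [i [<- _]]; apply Ha.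
Qed.

Lemma prime_renorm_cf_step (a : nat) y theta : (0 < a)%nat -> 0 <= y <= 1 ->
  theta = / (INR a + y) -> theta < 1 ->
  ((1 < a)%nat -> eqmod1 (prime_renorm theta) (/ (INR (a - 1) + y))) /\
  (a = 1%nat -> eqmod1 (prime_renorm theta) (1 - y)).
Proof.
  intros Ha Hy -> Ht; split.
  - intros Ha1.
    assert (H2 : 2 <= INR a) by (apply (le_INR 2); exact Ha1).
    rewrite minus_INR by lia; simpl INR.
    replace (/ (INR a - 1 + y)) with (/ (INR a + y) / (1 - / (INR a + y))) by (field; lra).
    apply prime_renorm_small; split.
    + apply Rinv_0_lt_compat; lra.
    + rewrite <- (Rinv_inv (1/2)); apply Rinv_le_contravar; lra.
  - intros ->; simpl INR in *.
    assert (Hy0 : 0 < y).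
    { destruct (Req_dec y 0) as [Hy0 | Hy0]; [| lra].
      rewrite Hy0, Rplus_0_r, Rinv_1 in Ht; lra. }
    replace (1 - y) with ((2 * / (1 + y) - 1) / / (1 + y)) by (field; lra).
    apply prime_renorm_large; split; [| exact Ht].
    rewrite <- (Rinv_inv (1/2)); apply Rinv_le_contravar; lra.
Qed.

Lemma prime_renorm_cf_fin a1 l theta : (0 < a1)%nat -> Forall (fun n => (0 < n)%nat) l ->
  theta = cf_fin (a1 :: l) -> theta < 1 ->
  ((1 < a1)%nat -> eqmod1 (prime_renorm theta) (cf_fin ((a1 - 1)%nat :: l))) /\
  (a1 = 1%nat -> eqmod1 (prime_renorm theta) (1 - cf_fin l)).
Proof. intros Ha1 Hl; apply prime_renorm_cf_step; [exact Ha1 | apply cf_fin_bounds, Hl]. Qed.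

Lemma prime_renorm_is_cf (a : nat -> nat) theta : (forall i, (0 < a i)%nat) ->
  is_cf a theta -> 0 < theta < 1 ->
  ((1 < a 0%nat)%nat -> exists x,
     is_cf (fun i => match i with O => (a 0%nat - 1)%nat | _ => a i end) x /\
     eqmod1 (prime_renorm theta) x) /\
  (a 0%nat = 1%nat -> exists x,
     is_cf (fun i => a (S i)) x /\ eqmod1 (prime_renorm theta) (1 - x)).
Proof.
  intros Ha Hcf Ht.
  destruct (is_cf_tail a theta Ha Hcf (proj1 Ht)) as [Htail Hx].
  set (x := / theta - INR (a 0%nat)) in *.
  assert (Htheta : theta = / (INR (a 0%nat) + x))
    by (unfold x; rewrite Rplus_minus, Rinv_inv; reflexivity).
  destruct (prime_renorm_cf_step (a 0%nat) x theta (Ha 0%nat) Hx Htheta (proj2 Ht))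
    as [Hbig Hone].
  split.
  - intros Ha1; exists (/ (INR (a 0%nat - 1) + x)); split; [| exact (Hbig Ha1)].
    apply (is_cf_cons (fun i => match i with O => (a 0%nat - 1)%nat | _ => a i end));
      [exact Htail |].
    assert (1 <= INR (a 0%nat - 1)) by (apply (le_INR 1); lia); lra.
  - intros Ha1; exists x; split; [exact Htail | exact (Hone Ha1)].
Qed.

Theorem lemmaA1 (t : R) (ht : 0 < t < 1) :
  (* the formula for R(theta) (equalities in R/Z) *)
  (t <= 1/2 -> eqmod1 (prime_renorm t) (t / (1 - t))) /\
  (1/2 <= t -> eqmod1 (prime_renorm t) ((2 * t - 1) / t)) /\
  (* infinite continued fractions: theta = [0; a1, a2, ...] *)
  (forall a : nat -> nat, (forall i, (0 < a i)%nat) -> is_cf a t ->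
     ((1 < a 0%nat)%nat -> exists x,
        is_cf (fun i => match i with O => (a 0%nat - 1)%nat | _ => a i end) x /\
        eqmod1 (prime_renorm t) x) /\
     (a 0%nat = 1%nat -> exists x,
        is_cf (fun i => a (S i)) x /\ eqmod1 (prime_renorm t) (1 - x))) /\
  (* infinite continued fractions: theta = 1 - [0; b1, b2, ...] *)
  (forall b : nat -> nat, (forall i, (0 < b i)%nat) -> is_cf b (1 - t) ->
     ((1 < b 0%nat)%nat -> exists x,
        is_cf (fun i => match i with O => (b 0%nat - 1)%nat | _ => b i end) x /\
        eqmod1 (prime_renorm t) (1 - x)) /\
     (b 0%nat = 1%nat -> exists x,
        is_cf (fun i => b (S i)) x /\ eqmod1 (prime_renorm t) x)) /\
  (* finite continued fractions: theta = [0; a1, ..., an] *)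
  (forall (a1 : nat) (l : list nat), (0 < a1)%nat -> Forall (fun n => (0 < n)%nat) l ->
     t = cf_fin (a1 :: l) ->
     ((1 < a1)%nat -> eqmod1 (prime_renorm t) (cf_fin ((a1 - 1)%nat :: l))) /\
     (a1 = 1%nat -> eqmod1 (prime_renorm t) (1 - cf_fin l))) /\
  (* finite continued fractions: theta = 1 - [0; b1, ..., bn] *)
  (forall (b1 : nat) (l : list nat), (0 < b1)%nat -> Forall (fun n => (0 < n)%nat) l ->
     t = 1 - cf_fin (b1 :: l) ->
     ((1 < b1)%nat -> eqmod1 (prime_renorm t) (1 - cf_fin ((b1 - 1)%nat :: l))) /\
     (b1 = 1%nat -> eqmod1 (prime_renorm t) (cf_fin l))).
Proof.
  assert (ht' : 0 < 1 - t < 1) by lra.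
  split; [intros; apply prime_renorm_small; lra |].
  split; [intros; apply prime_renorm_large; lra |].
  split; [intros a Ha Hcf; exact (prime_renorm_is_cf a t Ha Hcf ht) |].
  split.
  { intros b Hb Hcf; destruct (prime_renorm_is_cf b (1 - t) Hb Hcf ht') as [Hbig Hone].
    split.
    - intros Hb1; destruct (Hbig Hb1) as [x [Hx Hr]]; exists x.
      split; [exact Hx | exact (prime_renorm_reflect t x ht Hr)].
    - intros Hb1; destruct (Hone Hb1) as [x [Hx Hr]]; exists x.
      split; [exact Hx |]; replace x with (1 - (1 - x)) by ring.
      exact (prime_renorm_reflect t _ ht Hr). }
  split; [intros a1 l Ha1 Hl Ht; exact (prime_renorm_cf_fin a1 l t Ha1 Hl Ht (proj2 ht)) |].
  intros b1 l Hb1 Hl Ht.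
  destruct (prime_renorm_cf_fin b1 l (1 - t) Hb1 Hl ltac:(lra) (proj2 ht')) as [Hbig Hone].
  split.
  - intros H1; exact (prime_renorm_reflect t _ ht (Hbig H1)).
  - intros H1; replace (cf_fin l) with (1 - (1 - cf_fin l)) by ring.
    exact (prime_renorm_reflect t _ ht (Hone H1)).
Qed.
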